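(* Let $k,l\ge m>1$ be integers. There exist mutually unbiased equiangular tight frames $(v_1,\dots,v_k)$ and $(w_1,\dots,w_l)$ for $\mathbb{R}^m$ if and only if there exists a matrix $X\in\mathbb{R}^{k\times l}$ such that: (i) $X_{ij}\in\{-1,+1\}$ for all $i,j$; (ii) $XX^\top X=aX$ for some $a\in\mathbb{R}$; (iii) $|XX^\top|_{i,i'}$ is constant over all $i\neq i'$; (iv) $|X^\top X|_{j,j'}$ is constant over all $j\ne j'$; (v) $X$ has rank $m$. Moreover, when this occurs, the quantities $$\frac{kl}{m},\qquad k\sqrt{\frac{l-m}{m(l-1)}},\qquad l\sqrt{\frac{k-m}{m(k-1)}}$$ are all integers.
   Context: A system of unit vectors $(v_1,\dots,v_n)$ in $\mathbb{R}^m$ is an equiangular tight frame if $|\langle v_i,v_j\rangle|$ is the same constant for all $i\ne j$ and $VV^\top=\frac{n}{m}\mathrm{I}_m$, where $V$ has columns $v_i$. Two equiangular tight frames $(v_1,\dots,v_k)$, $(w_1,\dots,w_l)$ for $\mathbb{R}^m$ are mutually unbiased if there is $c\in\mathbb{R}$ with $|\langle v_i,w_j\rangle|=c$ for all $i,j$. $|A|$ denotes the entrywise absolute value of a matrix $A$. *)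

From HB Require Import structures.
From mathcomp Require Import all_boot all_order all_algebra.
From mathcomp Require Import reals.
Set Implicit Arguments. Unset Strict Implicit. Unset Printing Implicit Defensive.
Import Order.TTheory GRing.Theory Num.Theory.
Local Open Scope ring_scope.

(* Vectors v_1..v_n in R^m are the columns of V : 'M_(m, n);
   <v_i, v_j> = (V^T *m V) i j. *)
Definition is_ETF (R : realType) (m n : nat) (V : 'M[R]_(m, n)) : Prop :=
  (forall i : 'I_n, (V^T *m V) i i = 1) /\
  (exists c : R, forall i j : 'I_n, i != j -> `|(V^T *m V) i j| = c) /\
  V *m V^T = (n%:R / m%:R)%:M.

Definition mutually_unbiased (R : realType) (m k l : nat)
  (V : 'M[R]_(m, k)) (W : 'M[R]_(m, l)) : Prop :=
  exists c : R, forall (i : 'I_k) (j : 'I_l), `|(V^T *m W) i j| = c.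

Definition exists_MU_ETFs (R : realType) (m k l : nat) : Prop :=
  exists (V : 'M[R]_(m, k)) (W : 'M[R]_(m, l)),
    is_ETF V /\ is_ETF W /\ mutually_unbiased V W.

Definition absmx (R : realType) (p q : nat) (A : 'M[R]_(p, q)) : 'M[R]_(p, q) :=
  \matrix_(i, j) `|A i j|.

Definition good_X (R : realType) (m k l : nat) (X : 'M[R]_(k, l)) : Prop :=
  (forall i j, X i j = 1 \/ X i j = -1) /\
  (exists a : R, X *m X^T *m X = a *: X) /\
  (exists c : R, forall i i' : 'I_k, i != i' -> absmx (X *m X^T) i i' = c) /\
  (exists c : R, forall j j' : 'I_l, j != j' -> absmx (X^T *m X) j j' = c) /\
  \rank X = m.

Definition is_integer (R : realType) (x : R) : Prop := exists z : int, x = z%:~R.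

From HB Require Import structures.
From mathcomp Require Import all_boot all_order all_algebra.
From mathcomp Require Import reals.
From mathcomp Require Import zify ring.
Set Implicit Arguments.
Unset Strict Implicit.
Unset Printing Implicit Defensive.
Import Order.TTheory GRing.Theory Num.Theory.
Local Open Scope ring_scope.

(* If V and W are mutually unbiased ETFs with |<v_i, w_j>| = c, then
   X = sqrt m V^T W satisfies X X^T = l V^T V and X^T X = k W^T W; comparing
   diagonals gives m c^2 = 1, so X is a +-1 matrix, and tightness gives
   X X^T X = (kl/m) X and rank X = m.  Conversely, for such an X the matrix
   a^-1 X X^T is the orthogonal projection onto the row space of X^T;
   factoring it as U^T U with U an orthonormal basis of that space
   (Gram-Schmidt), V = sqrt(k/m) U and W = (sqrt m / k) V X are ETFs and
   V^T W is a multiple of X.  The three quantities are absolute values of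
   entries of the integer matrices X X^T X, X^T X and X X^T, the last two
   through the coherence sqrt((n-m)/(m(n-1))) of an ETF of n vectors in R^m. *)

Lemma tight_mulmx_trmx (R : comPzRingType) p m n
    (A : 'M[R]_(p, m)) (V : 'M[R]_(m, n)) c :
  V *m V^T = c%:M -> (A *m V) *m (A *m V)^T = c *: (A *m A^T).
Proof.
move=> VV; rewrite trmx_mul mulmxA -[A *m V *m V^T]mulmxA VV.
by rewrite mul_mx_scalar -scalemxAl.
Qed.

Lemma scalemx_mulmx_tr (R : comPzRingType) p q (c : R) (A : 'M[R]_(p, q)) :
  (c *: A) *m (c *: A)^T = c ^+ 2 *: (A *m A^T).
Proof. by rewrite [(_ *: _)^T]linearZ /= -scalemxAr -scalemxAl scalerA. Qed.

Lemma scalemx_tr_mulmx (R : comPzRingType) p q (c : R) (A : 'M[R]_(p, q)) :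
  (c *: A)^T *m (c *: A) = c ^+ 2 *: (A^T *m A).
Proof. by rewrite [(_ *: _)^T]linearZ /= -scalemxAr -scalemxAl scalerA. Qed.

Lemma row_free_eqmx (F : fieldType) r n (U A : 'M[F]_(r, n)) :
  row_free U -> (U <= A)%MS -> (U == A)%MS.
Proof.
move=> freeU sUA; rewrite -(mxrank_leqif_eq sUA).2 eqn_leq mxrankS //=.
by rewrite (eqP freeU) rank_leq_row.
Qed.

Lemma orthonormal_basis_projector (F : fieldType) k l m
    (X : 'M[F]_(k, l)) (U : 'M[F]_(m, k)) a :
  a != 0 -> X *m X^T *m X = a *: X -> U *m U^T = 1%:M -> (U == X^T)%MS ->
  U^T *m U = a^-1 *: (X *m X^T).
Proof.
move=> a0 cubeX UU /andP[/submxP[B eB] /submxP[D eD]].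
pose P := a^-1 *: (X *m X^T).
have PX : P *m X = X by rewrite -scalemxAl cubeX scalerA mulVf ?scale1r.
have PUt : P *m U^T = U^T by rewrite eB trmx_mul trmxK mulmxA PX.
have PUtU : P *m (U^T *m U) = P.
  by rewrite /P -!scalemxAl eD -!mulmxA [U *m (U^T *m U)]mulmxA UU mul1mx.
by rewrite -[RHS]PUtU mulmxA PUt.
Qed.

Section RealFieldMatrix.
Variable R : realFieldType.

Lemma mulmx_trmx_diag p q (A : 'M[R]_(p, q)) i :
  (A *m A^T) i i = \sum_j A i j ^+ 2.
Proof. by rewrite mxE; apply: eq_bigr => j _; rewrite mxE expr2. Qed.

Lemma mulmx_trmx_eq0 p q (A : 'M[R]_(p, q)) : (A *m A^T == 0) = (A == 0).
Proof.
apply/eqP/eqP => [AAt0|->]; last by rewrite mul0mx.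
apply/matrixP => i j; apply/eqP; rewrite mxE -sqrf_eq0; apply/eqP.
have sum0 : \sum_j A i j ^+ 2 = 0 by rewrite -mulmx_trmx_diag AAt0 mxE.
exact: (psumr_eq0P (fun j _ => sqr_ge0 (A i j)) sum0).
Qed.

Lemma cube_scale_neq0 p q (X : 'M[R]_(p, q)) a :
  X *m X^T *m X = a *: X -> X != 0 -> a != 0.
Proof.
move=> cubeX; apply: contra_neq => a0.
have XtX0 : (X^T *m X) *m (X^T *m X)^T = 0.
  rewrite trmx_mul trmxK -!mulmxA [X *m (X^T *m X)]mulmxA cubeX a0 scale0r.
  by rewrite mulmx0.
by apply/eqP; rewrite -trmx_eq0 -mulmx_trmx_eq0 trmxK -mulmx_trmx_eq0 XtX0.
Qed.

Lemma sign_mulmx_trmx_diag p q (A : 'M[R]_(p, q)) :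
  (forall i j, A i j = 1 \/ A i j = -1) -> forall i, (A *m A^T) i i = q%:R.
Proof.
move=> signA i; rewrite mulmx_trmx_diag (eq_bigr (fun=> 1)).
  by rewrite sumr_const card_ord.
by move=> j _; case: (signA i j) => ->; rewrite ?sqrrN expr1n.
Qed.

End RealFieldMatrix.

Section GramSchmidt.
Variable R : rcfType.

Lemma orthonormal_row_free r n (U : 'M[R]_(r, n)) :
  U *m U^T = 1%:M -> row_free U.
Proof.
move=> UU; rewrite /row_free eqn_leq rank_leq_row /=.
by rewrite -{1}(mxrank1 R r) -UU mxrankM_maxl.
Qed.

Lemma normalize_rowvector n (v : 'rV[R]_n) :
  v != 0 -> exists c : R, (c *: v) *m (c *: v)^T = 1%:M.
Proof.
move=> v0; pose s := (v *m v^T) 0 0.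
have s_gt0 : 0 < s.
  rewrite lt_def /s mulmx_trmx_diag sumr_ge0 ?andbT => [|j _]; last first.
    exact: sqr_ge0.
  rewrite -mulmx_trmx_diag; apply: contra v0 => /eqP s0.
  by rewrite -mulmx_trmx_eq0; apply/eqP/matrixP => i j; rewrite !ord1 s0 mxE.
exists (Num.sqrt s)^-1; rewrite scalemx_mulmx_tr [v *m v^T]mx11_scalar -/s.
by rewrite exprVn sqr_sqrtr ?ltW // -scalemx1 scalerA mulVf ?gt_eqF ?scale1r.
Qed.

Lemma orthonormal_extend r n (U : 'M[R]_(r, n)) (a : 'rV[R]_n) :
  U *m U^T = 1%:M -> ~~ (a <= U)%MS ->
  exists2 U' : 'M[R]_(1 + r, n), U' *m U'^T = 1%:M & (U' <= a + U)%MS.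
Proof.
move=> UU aU; pose v := a - a *m U^T *m U.
have vU : v *m U^T = 0 by rewrite mulmxBl -!mulmxA UU mulmx1 subrr.
have v0 : v != 0.
  apply: contra aU => /eqP v0; rewrite (_ : a = a *m U^T *m U) ?submxMl //.
  by apply/eqP; rewrite -subr_eq0 -/v v0.
have [c cv] := normalize_rowvector v0.
have cvU : (c *: v) *m U^T = 0 by rewrite -scalemxAl vU scaler0.
exists (col_mx (c *: v) U).
  rewrite tr_col_mx mul_col_row cv cvU UU -[U *m _]trmxK trmx_mul trmxK cvU.
  by rewrite trmx0 scalar_mx_block.
rewrite col_mx_sub addsmxSr andbT scalemx_sub // addmx_sub_adds //.
by rewrite eqmx_opp submxMl.
Qed.

Lemma orthonormal_row_basis r n (A : 'M[R]_(r, n)) :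
  row_free A -> exists2 U : 'M[R]_(r, n), U *m U^T = 1%:M & (U == A)%MS.
Proof.
elim: r A => [|r IH] A freeA.
  by exists A; rewrite ?[_ *m _]flatmx0 ?[1%:M]flatmx0 ?submx_refl.
pose a := usubmx (A : 'M_(1 + r, n)); pose B := dsubmx (A : 'M_(1 + r, n)).
have rankA : \rank (a + B)%MS = r.+1 by rewrite addsmxE vsubmxK; exact/eqP.
have freeB : row_free B.
  rewrite /row_free eqn_leq rank_leq_row /= -ltnS -rankA.
  apply: leq_trans (mxrank_adds_leqif a B) _.
  by have := rank_leq_row a; lia.
have [U1 UU1 eqU1B] := IH B freeB.
have aU1 : ~~ (a <= U1)%MS.
  rewrite (eqmxP eqU1B); apply/negP => aB; suff : (r.+1 <= r)%N by rewrite ltnn.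
  rewrite -rankA -[X in (_ <= X)%N](eqP freeB) mxrankS //.
  by rewrite addsmx_sub aB submx_refl.
have [U UU sUA] := orthonormal_extend UU1 aU1.
exists U => //; apply: row_free_eqmx; first exact: orthonormal_row_free.
apply: submx_trans sUA _.
by rewrite (adds_eqmx (eqmx_refl a) (eqmxP eqU1B)) addsmxE vsubmxK submx_refl.
Qed.

End GramSchmidt.

Section Frames.
Variable R : realType.

Lemma is_ETF_gram m n (V : 'M[R]_(m, n)) (G : 'M[R]_n) c :
  c != 0 -> V *m V^T = (n%:R / m%:R)%:M -> V^T *m V = c^-1 *: G ->
  (forall i, G i i = c) -> (exists d, forall i j, i != j -> `|G i j| = d) ->
  is_ETF V.
Proof.
move=> c0 tight gram diag [d offdiag]; split; [|split] => //.
  by move=> i; rewrite gram mxE diag mulVf.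
by exists (`|c|^-1 * d) => i j ij; rewrite gram mxE normrM normfV offdiag.
Qed.

Lemma ETF_coherence m n (V : 'M[R]_(m, n)) : (0 < m)%N -> is_ETF V ->
  forall i j, i != j ->
  `|(V^T *m V) i j| = Num.sqrt ((n%:R - m%:R) / (m%:R * (n%:R - 1))).
Proof.
move=> m_gt0 [diag1 [[c offdiag] tight]] i j ij.
have n_gt1 : (1 < n)%N.
  by rewrite -(card_ord n) (cardD1 i) (cardD1 j) !inE eq_sym ij.
have c_ge0 : 0 <= c by rewrite -(offdiag i j ij) normr_ge0.
(* Row i of the identity (V^T V) (V^T V)^T = (n/m) V^T V. *)
have row_i : n%:R / m%:R = 1 + c ^+ 2 * (n%:R - 1).
  have := mulmx_trmx_diag (V^T *m V) i.
  rewrite (tight_mulmx_trmx _ tight) trmxK mxE diag1 mulr1 (bigD1 i) //=.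
  rewrite diag1 expr1n (eq_bigr (fun=> c ^+ 2)) => [->|k ki]; last first.
    by rewrite -(offdiag i k) 1?eq_sym // real_normK ?num_real.
  rewrite sumr_const cardC1 card_ord -[_ *+ _]mulr_natr -subn1 natrB //.
  exact: ltnW.
have c2 : c ^+ 2 = (n%:R - m%:R) / (m%:R * (n%:R - 1)).
  have n1 : n%:R - 1 != 0 :> R by rewrite subr_eq0 pnatr_eq1 gtn_eqF.
  have m0 : m%:R != 0 :> R by rewrite pnatr_eq0 -lt0n.
  have -> : c ^+ 2 = (n%:R / m%:R - 1) / (n%:R - 1).
    by rewrite row_i addrC addKr mulfK.
  by field; rewrite m0 n1.
by rewrite offdiag // -c2 sqrtr_sqr ger0_norm.
Qed.

End Frames.

Definition scaled_cross_gram (R : realType) m k l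
    (V : 'M[R]_(m, k)) (W : 'M[R]_(m, l)) : 'M[R]_(k, l) :=
  Num.sqrt m%:R *: (V^T *m W).

Section CrossGram.
Variables (R : realType) (m : nat).
Hypothesis m_gt0 : (0 < m)%N.

Let sqrt_m2 : Num.sqrt m%:R ^+ 2 = m%:R :> R.
Proof. by rewrite sqr_sqrtr ?ler0n. Qed.

Lemma trmx_cross_gram k l (V : 'M[R]_(m, k)) (W : 'M[R]_(m, l)) :
  (scaled_cross_gram V W)^T = scaled_cross_gram W V.
Proof. by rewrite /scaled_cross_gram linearZ /= trmx_mul trmxK. Qed.

Lemma cross_gram_mulmx_tr k l (V : 'M[R]_(m, k)) (W : 'M[R]_(m, l)) :
  W *m W^T = (l%:R / m%:R)%:M ->
  scaled_cross_gram V W *m (scaled_cross_gram V W)^T = l%:R *: (V^T *m V).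
Proof.
move=> tightW; rewrite scalemx_mulmx_tr sqrt_m2 (tight_mulmx_trmx _ tightW).
by rewrite trmxK scalerA mulrC divfK // pnatr_eq0 -lt0n.
Qed.

Variables (k l : nat) (V : 'M[R]_(m, k)) (W : 'M[R]_(m, l)).
Hypotheses (ETF_V : is_ETF V) (ETF_W : is_ETF W).

Local Notation X := (scaled_cross_gram V W).

Lemma cross_gram_tr_mulmx : X^T *m X = k%:R *: (W^T *m W).
Proof.
by rewrite -[X in _ *m X]trmxK trmx_cross_gram cross_gram_mulmx_tr ?ETF_V.2.2.
Qed.

Lemma cross_gram_cube : X *m X^T *m X = ((k * l)%:R / m%:R) *: X.
Proof.
rewrite (cross_gram_mulmx_tr _ ETF_W.2.2) -scalemxAl /scaled_cross_gram.
rewrite -scalemxAr !mulmxA -[V^T *m V *m V^T]mulmxA ETF_V.2.2 mul_mx_scalar.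
by rewrite -scalemxAl !scalerA natrM; congr (_ *: _); ring.
Qed.

Lemma cross_gram_rank : (0 < k)%N -> (0 < l)%N -> \rank X = m.
Proof.
move=> k_gt0 l_gt0; apply/eqP; rewrite eqn_leq /scaled_cross_gram.
rewrite mxrank_scale_nz ?sqrtr_eq0 -?ltNge ?ltr0n //.
rewrite (leq_trans (mxrankM_maxr _ _) (rank_leq_row W)) /=.
have VXW : V *m (V^T *m W) *m W^T = (k%:R / m%:R * (l%:R / m%:R))%:M.
  rewrite mulmxA ETF_V.2.2 mul_scalar_mx -scalemxAl ETF_W.2.2.
  by rewrite scale_scalar_mx.
have := mxrankM_maxl (V *m (V^T *m W)) W^T.
rewrite VXW -scalemx1 mxrank_scale_nz ?mxrank1 => [/leq_trans-> //|].
  exact: mxrankM_maxr.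
by rewrite !mulf_neq0 ?invr_eq0 ?pnatr_eq0 -?lt0n.
Qed.

Lemma cross_gram_offdiag_mulmx_tr i i' : i != i' ->
  `|(X *m X^T) i i'| =
    l%:R * Num.sqrt ((k%:R - m%:R) / (m%:R * (k%:R - 1))).
Proof.
move=> ii'; rewrite (cross_gram_mulmx_tr _ ETF_W.2.2) mxE normrM.
by rewrite ger0_norm ?ler0n ?ETF_coherence.
Qed.

Lemma cross_gram_offdiag_tr_mulmx j j' : j != j' ->
  `|(X^T *m X) j j'| =
    k%:R * Num.sqrt ((l%:R - m%:R) / (m%:R * (l%:R - 1))).
Proof.
move=> jj'; rewrite cross_gram_tr_mulmx mxE normrM.
by rewrite ger0_norm ?ler0n ?ETF_coherence.
Qed.

Hypothesis unbiased_VW : mutually_unbiased V W.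

Lemma cross_gram_sign i j : X i j = 1 \/ X i j = -1.
Proof.
have [c VWc] := unbiased_VW.
have Xsq j' : X i j' ^+ 2 = m%:R * c ^+ 2.
  by rewrite mxE exprMn sqrt_m2 -(VWc i j') real_normK ?num_real.
have l0 : l%:R != 0 :> R.
  by rewrite pnatr_eq0 -lt0n (leq_ltn_trans _ (ltn_ord j)).
have mc2 : m%:R * c ^+ 2 = 1.
  have := mulmx_trmx_diag X i.
  rewrite (cross_gram_mulmx_tr _ ETF_W.2.2) mxE ETF_V.1 mulr1.
  rewrite (eq_bigr _ (fun j' _ => Xsq j')) sumr_const card_ord.
  by rewrite -[(_ * _) *+ l]mulr_natl -{1}[l%:R]mulr1 => /(mulfI l0) <-.
have : X i j ^+ 2 == 1 by rewrite Xsq mc2.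
by rewrite sqrf_eq1 => /orP[] /eqP; [left | right].
Qed.

Lemma cross_gram_good : (0 < k)%N -> (0 < l)%N -> good_X m X.
Proof.
move=> k_gt0 l_gt0; split; first exact: cross_gram_sign.
split; first by exists ((k * l)%:R / m%:R); exact: cross_gram_cube.
split; first by eexists => i i' ii'; rewrite mxE cross_gram_offdiag_mulmx_tr.
split; first by eexists => j j' jj'; rewrite mxE cross_gram_offdiag_tr_mulmx.
exact: cross_gram_rank.
Qed.

End CrossGram.

Section SignMatrix.
Variables (R : realType) (m k l : nat) (X : 'M[R]_(k, l)) (a : R).
Hypotheses (m_gt0 : (0 < m)%N) (signX : forall i j, X i j = 1 \/ X i j = -1).
Hypotheses (cubeX : X *m X^T *m X = a *: X) (rankX : \rank X = m).

Let signXt i j : X^T i j = 1 \/ X^T i j = -1.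
Proof. by rewrite mxE. Qed.

Let k_neq0 : k%:R != 0 :> R.
Proof. by rewrite pnatr_eq0 -lt0n (leq_trans m_gt0) // -rankX rank_leq_row. Qed.

Let l_neq0 : l%:R != 0 :> R.
Proof. by rewrite pnatr_eq0 -lt0n (leq_trans m_gt0) // -rankX rank_leq_col. Qed.

Let m_neq0 : m%:R != 0 :> R.
Proof. by rewrite pnatr_eq0 -lt0n. Qed.

Lemma sign_cube_factor :
  a = (k * l)%:R / m%:R /\
  exists2 U : 'M[R]_(m, k), U *m U^T = 1%:M & X *m X^T = a *: (U^T *m U).
Proof.
have a_neq0 : a != 0.
  by rewrite (cube_scale_neq0 cubeX) // -mxrank_eq0 rankX -lt0n.
have [U UU eqUXt] :
    exists2 U : 'M[R]_(m, k), U *m U^T = 1%:M & (U == X^T)%MS.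
  rewrite -rankX -mxrank_tr.
  have [U UU eqU] := orthonormal_row_basis (row_base_free X^T).
  by exists U => //; apply/eqmxP; apply: eqmx_trans (eqmxP eqU) (eq_row_base _).
have XXt : X *m X^T = a *: (U^T *m U).
  rewrite (orthonormal_basis_projector a_neq0 cubeX UU eqUXt).
  by rewrite scalerA divff ?scale1r.
split; last by exists U.
(* Taking traces: k l = a \tr (U U^T) = a m. *)
have := congr1 mxtrace XXt.
rewrite mxtraceZ [\tr (U^T *m U)]mxtrace_mulC UU mxtrace1 /mxtrace.
rewrite (eq_bigr _ (fun i _ => sign_mulmx_trmx_diag signX i)) sumr_const.
by rewrite card_ord -mulrnA mulnC => ->; rewrite mulfK.
Qed.

Hypothesis offXXt :
  exists c, forall i i' : 'I_k, i != i' -> absmx (X *m X^T) i i' = c.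
Hypothesis offXtX :
  exists c, forall j j' : 'I_l, j != j' -> absmx (X^T *m X) j j' = c.

Lemma sign_cube_MU_ETFs : exists_MU_ETFs R m k l.
Proof.
have [aE [U UU XXt]] := sign_cube_factor.
pose s := Num.sqrt (k%:R / m%:R) : R; pose t := Num.sqrt m%:R / k%:R : R.
have s2 : s ^+ 2 = k%:R / m%:R by rewrite sqr_sqrtr // divr_ge0 ?ler0n.
have t2 : t ^+ 2 = m%:R / k%:R ^+ 2.
  by rewrite exprMn sqr_sqrtr ?ler0n // exprVn.
pose V := s *: U; pose W := t *: (V *m X).
have VVt : V *m V^T = (k%:R / m%:R)%:M.
  by rewrite scalemx_mulmx_tr UU s2 scalemx1.
have VtV : V^T *m V = l%:R^-1 *: (X *m X^T).
  rewrite scalemx_tr_mulmx XXt scalerA s2 aE natrM; congr (_ *: _).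
  by field; rewrite m_neq0 l_neq0.
have VtW : V^T *m W = (t * l%:R^-1 * a) *: X.
  by rewrite -scalemxAr mulmxA VtV -scalemxAl cubeX !scalerA.
have WtW : W^T *m W = k%:R^-1 *: (X^T *m X).
  rewrite scalemx_tr_mulmx trmx_mul !mulmxA -[X^T *m V^T *m V]mulmxA VtV.
  rewrite -scalemxAr -scalemxAl -[X^T *m (X *m X^T) *m X]mulmxA cubeX.
  rewrite -scalemxAr !scalerA t2 aE natrM; congr (_ *: _).
  by field; rewrite k_neq0 m_neq0 l_neq0.
have WWt : W *m W^T = (l%:R / m%:R)%:M.
  have XXtV : X *m X^T = l%:R *: (V^T *m V).
    by rewrite VtV scalerA divff ?scale1r.
  rewrite scalemx_mulmx_tr trmx_mul mulmxA -[V *m X *m X^T]mulmxA XXtV.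
  rewrite -scalemxAr -scalemxAl mulmxA VVt mul_scalar_mx -scalemxAl VVt.
  rewrite !scale_scalar_mx t2; congr (_%:M).
  by field; rewrite k_neq0 m_neq0.
exists V, W; split; [|split].
- apply: (is_ETF_gram l_neq0 VVt VtV (sign_mulmx_trmx_diag signX)).
  have [c offc] := offXXt; exists c => i j ij.
  by rewrite -(offc i j ij) /absmx !mxE.
- have diagXtX j : (X^T *m X) j j = k%:R.
    by rewrite -[X in _ *m X]trmxK (sign_mulmx_trmx_diag signXt).
  apply: (is_ETF_gram k_neq0 WWt WtW diagXtX).
  have [c offc] := offXtX; exists c => i j ij.
  by rewrite -(offc i j ij) /absmx !mxE.
- exists `|t * l%:R^-1 * a| => i j; rewrite VtW mxE normrM.
  by case: (signX i j) => ->; rewrite ?normrN normr1 mulr1.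
Qed.

End SignMatrix.

Lemma sign_mxOver_int (R : archiNumDomainType) p q (A : 'M[R]_(p, q)) :
  (forall i j, A i j = 1 \/ A i j = -1) -> A \is a mxOver Num.int.
Proof.
move=> signA; apply/mxOverP => i j.
by case: (signA i j) => ->; rewrite ?rpredN rpred1.
Qed.

Lemma mxOver_int_norm_entry (R : realType) p q (A : 'M[R]_(p, q)) i j :
  A \is a mxOver Num.int -> is_integer `|A i j|.
Proof.
by move/mxOverP/(_ i j)/intrP => [z ->]; exists `|z|; rewrite intr_norm.
Qed.

Lemma cross_gram_integrality (R : realType) m k l
    (V : 'M[R]_(m, k)) (W : 'M[R]_(m, l)) :
  (0 < m)%N -> (1 < k)%N -> (1 < l)%N ->
  is_ETF V -> is_ETF W -> mutually_unbiased V W ->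
  [/\ is_integer ((k * l)%:R / m%:R : R),
      is_integer (k%:R * Num.sqrt ((l%:R - m%:R) / (m%:R * (l%:R - 1))) : R)
    & is_integer (l%:R * Num.sqrt ((k%:R - m%:R) / (m%:R * (k%:R - 1))) : R)].
Proof.
move=> m_gt0 k_gt1 l_gt1 ETF_V ETF_W VW; set X := scaled_cross_gram V W.
have signX := cross_gram_sign m_gt0 ETF_V ETF_W VW.
have Xint : X \is a mxOver Num.int := sign_mxOver_int signX.
have Xtint : X^T \is a mxOver Num.int.
  by apply: sign_mxOver_int => i j; rewrite mxE.
pose i0 : 'I_k := Ordinal (ltnW k_gt1); pose i1 : 'I_k := Ordinal k_gt1.
pose j0 : 'I_l := Ordinal (ltnW l_gt1); pose j1 : 'I_l := Ordinal l_gt1.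
split.
- have -> : (k * l)%:R / m%:R = `|(X *m X^T *m X) i0 j0| :> R.
    rewrite cross_gram_cube // mxE normrM ger0_norm ?divr_ge0 ?ler0n //.
    by case: (signX i0 j0) => ->; rewrite ?normrN normr1 mulr1.
  by apply: mxOver_int_norm_entry; rewrite !mxOverM.
- have := mxOver_int_norm_entry j0 j1 (mxOverM Xtint Xint).
  by rewrite cross_gram_offdiag_tr_mulmx.
- have := mxOver_int_norm_entry i0 i1 (mxOverM Xint Xtint).
  by rewrite cross_gram_offdiag_mulmx_tr.
Qed.

Theorem proposition2 (R : realType) (k l m : nat)
  (hm : (1 < m)%N) (hk : (m <= k)%N) (hl : (m <= l)%N) :
  (exists_MU_ETFs R m k l <-> exists X : 'M[R]_(k, l), good_X m X) /\
  (exists_MU_ETFs R m k l ->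
     is_integer ((k * l)%:R / m%:R : R) /\
     is_integer (k%:R * Num.sqrt ((l%:R - m%:R) / (m%:R * (l%:R - 1))) : R) /\
     is_integer (l%:R * Num.sqrt ((k%:R - m%:R) / (m%:R * (k%:R - 1))) : R)).
Proof.
have m_gt0 : (0 < m)%N := ltnW hm.
have k_gt1 : (1 < k)%N := leq_trans hm hk.
have l_gt1 : (1 < l)%N := leq_trans hm hl.
split; first split.
- case=> V [W [ETF_V [ETF_W VW]]]; exists (scaled_cross_gram V W).
  by apply: cross_gram_good => //; apply: ltnW.
- case=> X [signX [[a cubeX] [offXXt [offXtX rankX]]]].
  exact: (sign_cube_MU_ETFs m_gt0 signX cubeX rankX offXXt offXtX).
case=> V [W [ETF_V [ETF_W VW]]].
by have [] := cross_gram_integrality m_gt0 k_gt1 l_gt1 ETF_V ETF_W VW.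
Qed.
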